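(* Let $A$ be a T-brace. If the additive group of the $\star$-center $\zeta(\star,A)$ of $A$ is torsion-free, then the upper $\star$-hypercenter $\zeta_\infty(\star,A)$ of $A$ coincides with $\zeta(\star,A)$.
   Context: A (left) brace is a set $A$ with two operations $+$ and $\cdot$ such that $(A,+)$ is an abelian group, $(A,\cdot)$ is a group, and $a(b+c)=ab+ac-a$ for all $a,b,c\in A$; the identities of both groups coincide (denoted $0$). Put $a\star b=ab-a-b$. A subbrace is a subset which is a subgroup of both $(A,+)$ and $(A,\cdot)$. A subbrace $L$ is an ideal of $A$ if $a\star z\in L$ and $z\star a\in L$ for all $a\in A$, $z\in L$; then the quotient brace $A/L$ is defined naturally. A brace $A$ is a T-brace if being an ideal is transitive: whenever $I$ is an ideal of $J$ and $J$ is an ideal of $A$, $I$ is an ideal of $A$. The $\star$-center is $\zeta(\star,A)=\{a\in A: a\star x=x\star a=0 \text{ for all } x\in A\}$, an ideal of $A$. The upper $\star$-central series is defined by $\zeta_0(\star,A)=0$, $\zeta_1(\star,A)=\zeta(\star,A)$, $\zeta_{\alpha+1}(\star,A)/\zeta_\alpha(\star,A)=\zeta(\star,A/\zeta_\alpha(\star,A))$, and $\zeta_\lambda(\star,A)=\bigcup_{\mu<\lambda}\zeta_\mu(\star,A)$ for limit ordinals $\lambda$; its last term $\zeta_\infty(\star,A)$ is the upper $\star$-hypercenter. *)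

Record brace := Brace {
  carrier :> Type;
  add : carrier -> carrier -> carrier;
  opp : carrier -> carrier;
  zero : carrier;
  mul : carrier -> carrier -> carrier;
  inv : carrier -> carrier;
  addA : forall a b c, add a (add b c) = add (add a b) c;
  addC : forall a b, add a b = add b a;
  add0r : forall a, add zero a = a;
  addNr : forall a, add (opp a) a = zero;
  mulA : forall a b c, mul a (mul b c) = mul (mul a b) c;
  mul0r : forall a, mul zero a = a;
  mulr0 : forall a, mul a zero = a;
  mulVr : forall a, mul (inv a) a = zero;
  mulrV : forall a, mul a (inv a) = zero;
  brace_law : forall a b c,
      mul a (add b c) = add (add (mul a b) (mul a c)) (opp a)
}.

Arguments add {_}. Arguments opp {_}. Arguments zero {_}.
Arguments mul {_}. Arguments inv {_}.

Section BraceDefs.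
Variable A : brace.

Definition star (a b : A) : A := add (add (mul a b) (opp a)) (opp b).

Fixpoint nmul (n : nat) (a : A) : A :=
  match n with O => zero | S m => add a (nmul m a) end.

Definition subbrace (L : A -> Prop) : Prop :=
  L zero /\
  (forall x y, L x -> L y -> L (add x y)) /\
  (forall x, L x -> L (opp x)) /\
  (forall x y, L x -> L y -> L (mul x y)) /\
  (forall x, L x -> L (inv x)).

(* [I] is an ideal of the subbrace [J] (viewed as a brace in its own right):
   I is a subbrace of J, and a*z, z*a lie in I for all a in J, z in I. *)
Definition ideal_of (J I : A -> Prop) : Prop :=
  subbrace I /\ (forall x, I x -> J x) /\
  (forall a z, J a -> I z -> I (star a z) /\ I (star z a)).

Definition ideal (I : A -> Prop) : Prop := ideal_of (fun _ => True) I.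

Definition T_brace : Prop :=
  forall I J : A -> Prop, subbrace J -> ideal_of J I -> ideal J -> ideal I.

Definition star_center (a : A) : Prop :=
  forall x, star a x = zero /\ star x a = zero.

(* Successor step of the upper star-central series:
   zeta_{alpha+1} is the preimage in A of zeta(star, A/zeta_alpha).
   Since the zero of A/H is the coset H and the class of a*x is the star of
   the classes, a + H is star-central in A/H iff a*x, x*a lie in H for all x. *)
Definition next_term (H : A -> Prop) (a : A) : Prop :=
  forall x, H (star a x) /\ H (star x a).

(* The terms zeta_alpha (alpha any ordinal) of the upper star-central series:
   the smallest class containing zeta_0 = 0, closed under the successor step
   and under unions of (nonempty) families of terms (limit steps). *)
Inductive ucs_term : (A -> Prop) -> Prop :=
  | ucs_zero : ucs_term (fun a => a = zero)
  | ucs_succ : forall H, ucs_term H -> ucs_term (next_term H)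
  | ucs_union : forall F : (A -> Prop) -> Prop,
      (exists H, F H) -> (forall H, F H -> ucs_term H) ->
      ucs_term (fun a => exists H, F H /\ H a).

(* The upper star-hypercenter: the last term, i.e. the union of all terms. *)
Definition star_hypercenter (a : A) : Prop :=
  exists H, ucs_term H /\ H a.

Definition center_torsion_free : Prop :=
  forall (z : A) (n : nat), star_center z -> nmul (S n) z = zero -> z = zero.

End BraceDefs.

From HB Require Import structures.
From mathcomp Require Import all_boot all_algebra.
From mathcomp Require Import boolp zify.
From Pilot Require Import Defs.
Import GRing.Theory.

(* For a ∈ A the map λ_a : x ↦ ax - a is additive and λ_(uv) = λ_u λ_v; hence
   x ↦ a ⋆ x is additive, and on the second term ζ₂ of the upper ⋆-central
   series u ↦ u ⋆ x is additive as well.  By transfinite induction along the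
   series it suffices to show ζ₂ = ζ.  Let a ∈ ζ₂.  If k·a ∈ ζ for some k > 0,
   then k·(a ⋆ x) = (k·a) ⋆ x = 0 and torsion-freeness gives a ∈ ζ.  Otherwise
   put b = a + a and d = b ⋆ b ∈ ζ.  J = ℤb + ζ is an ideal of A and I = ℤb + ℤd
   is an ideal of J, so I is an ideal of A since A is a T-brace.  As I ∩ ζ = ℤd,
   every b ⋆ x and x ⋆ b is a multiple of d; for x = a this reads
   b ⋆ a = m·d = 2m·(b ⋆ a), so b ⋆ a = 0 by torsion-freeness, hence d = 0 and
   b = a + a ∈ ζ, a contradiction. *)

Section Brace.
Variable A : brace.

HB.instance Definition _ := gen_eqMixin (carrier A).
HB.instance Definition _ := gen_choiceMixin (carrier A).
HB.instance Definition _ :=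
  GRing.isZmodule.Build (carrier A)
    (@Defs.addA A) (@Defs.addC A) (@Defs.add0r A) (@Defs.addNr A).

Local Open Scope ring_scope.
Local Infix "⋆" := (star A) (at level 40).
Local Notation zeta1 := (star_center A).
Local Notation zeta2 := (next_term A (star_center A)).

Implicit Types a b u v x y z : A.

Definition lambda a x : A := mul a x - a.

Lemma lambda_is_nmod_morphism a : nmod_morphism (lambda a).
Proof.
split=> [|x y]; first by rewrite /lambda Defs.mulr0 subrr.
by rewrite /lambda Defs.brace_law addrACA addrA.
Qed.

HB.instance Definition _ a :=
  GRing.isNmodMorphism.Build A A (lambda a) (lambda_is_nmod_morphism a).

Lemma lambdaM u v x : lambda (mul u v) x = lambda u (lambda v x).
Proof.
by rewrite [lambda v x]/lambda raddfB /= /lambda Defs.mulA opprB subrKA.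
Qed.

Lemma star_lambda a x : a ⋆ x = lambda a x - x.
Proof. by []. Qed.

Lemma mul_star a x : mul a x = a ⋆ x + a + x.
Proof. by rewrite star_lambda /lambda addrAC !subrK. Qed.

Lemma star_is_nmod_morphism a : nmod_morphism (star A a).
Proof.
split=> [|x y]; first by rewrite star_lambda raddf0 subr0.
by rewrite !star_lambda raddfD opprD addrACA.
Qed.

HB.instance Definition _ a :=
  GRing.isNmodMorphism.Build A A (star A a) (star_is_nmod_morphism a).

Lemma star0r a : a ⋆ 0 = 0. Proof. exact: raddf0. Qed.
Lemma starDr a x y : a ⋆ (x + y) = a ⋆ x + a ⋆ y. Proof. exact: raddfD. Qed.
Lemma starNr a x : a ⋆ (- x) = - (a ⋆ x). Proof. exact: raddfN. Qed.
Lemma starBr a x y : a ⋆ (x - y) = a ⋆ x - a ⋆ y. Proof. exact: raddfB. Qed.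
Lemma starMnr a x n : a ⋆ (x *+ n) = (a ⋆ x) *+ n. Proof. exact: raddfMn. Qed.
Lemma starMzr a x n : a ⋆ (x *~ n) = (a ⋆ x) *~ n. Proof. exact: raddfMz. Qed.

Lemma star0l x : 0 ⋆ x = 0.
Proof. by rewrite star_lambda /lambda Defs.mul0r subr0 subrr. Qed.

Lemma starMl u v x : mul u v ⋆ x = u ⋆ (v ⋆ x) + u ⋆ x + v ⋆ x.
Proof.
by rewrite !star_lambda lambdaM [lambda u (_ - x)]raddfB /=
  [RHS]addrAC [in RHS]subrK [RHS]subrKA.
Qed.

Lemma star_centerl {z} : zeta1 z -> forall x, z ⋆ x = 0.
Proof. by move=> hz x; case: (hz x). Qed.

Lemma star_centerr {z} : zeta1 z -> forall x, x ⋆ z = 0.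
Proof. by move=> hz x; case: (hz x). Qed.

Lemma mul_centerl z x : zeta1 z -> mul z x = z + x.
Proof. by move=> hz; rewrite mul_star star_centerl // add0r. Qed.

Lemma center0 : zeta1 0.
Proof. by move=> x; rewrite star0l star0r. Qed.

Lemma centerD {z1 z2} : zeta1 z1 -> zeta1 z2 -> zeta1 (z1 + z2).
Proof.
move=> h1 h2 x; split; last by rewrite starDr !star_centerr // addr0.
by rewrite -mul_centerl // starMl !star_centerl // !addr0.
Qed.

Lemma centerN {z} : zeta1 z -> zeta1 (- z).
Proof.
move=> hz x; split; last by rewrite starNr star_centerr // oppr0.
have : mul z (- z) ⋆ x = 0 by rewrite mul_centerl // subrr star0l.
by rewrite starMl !(star_centerl hz) !add0r.
Qed.

Lemma centerMn {z} n : zeta1 z -> zeta1 (z *+ n).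
Proof.
move=> hz; elim: n => [|n IHn]; first exact: center0.
by rewrite mulrS; apply: centerD.
Qed.

Lemma centerMz {z} n : zeta1 z -> zeta1 (z *~ n).
Proof. by move=> hz; case: n => n; [|apply: centerN]; apply: centerMn. Qed.

Lemma center_second {z} : zeta1 z -> zeta2 z.
Proof.
by move=> hz x; rewrite star_centerl // star_centerr //; split; apply: center0.
Qed.

Lemma starDl_center {z} : zeta1 z -> forall y x, (y + z) ⋆ x = y ⋆ x.
Proof.
move=> hz y x; rewrite [y + z]addrC -mul_centerl //.
by rewrite starMl !(star_centerl hz) !add0r.
Qed.

Lemma starDl u v x : zeta2 u -> zeta2 v -> (u + v) ⋆ x = u ⋆ x + v ⋆ x.
Proof.
move=> hu hv; have [huv _] := hu v; have [hvx _] := hv x.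
have -> : u + v = mul u v - u ⋆ v.
  by rewrite mul_star addrAC [_ ⋆ _ + u]addrC addrK.
by rewrite (starDl_center (centerN huv)) starMl (star_centerr hvx) add0r.
Qed.

Lemma second_centerD {u v} : zeta2 u -> zeta2 v -> zeta2 (u + v).
Proof.
move=> hu hv x; rewrite starDr starDl //.
by have [? ?] := hu x; have [? ?] := hv x; split; apply: centerD.
Qed.

Lemma inv_second_center {u} : zeta2 u -> inv u = - u + u ⋆ u.
Proof.
move=> hu; have [hui _] := hu (inv u).
have e : inv u = - u - u ⋆ inv u.
  apply/eqP; rewrite -opprD -addr_eq0 addrC [u + _]addrC -mul_star.
  by rewrite Defs.mulrV.
by rewrite {1}e e starBr starNr (star_centerr hui) subr0 opprK.
Qed.

Lemma starNl u x : zeta2 u -> (- u) ⋆ x = - (u ⋆ x).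
Proof.
move=> hu; have [hux _] := hu x; have [huu _] := hu u.
have : mul (inv u) u ⋆ x = 0 by rewrite Defs.mulVr star0l.
rewrite starMl (star_centerr hux) add0r => /eqP; rewrite addr_eq0 => /eqP <-.
rewrite -[- u](addrK (u ⋆ u)) -inv_second_center //.
by rewrite (starDl_center (centerN huu)).
Qed.

Lemma second_centerN {u} : zeta2 u -> zeta2 (- u).
Proof.
move=> hu x; rewrite starNl // starNr.
by have [? ?] := hu x; split; apply: centerN.
Qed.

Lemma second_centerMn {u} n : zeta2 u -> zeta2 (u *+ n).
Proof.
move=> hu; elim: n => [|n IHn]; first exact/center_second/center0.
by rewrite mulrS; apply: second_centerD.
Qed.

Lemma starMnl u x n : zeta2 u -> (u *+ n) ⋆ x = (u ⋆ x) *+ n.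
Proof.
move=> hu; elim: n => [|n IHn]; first by rewrite !mulr0n star0l.
by rewrite !mulrS starDl ?IHn //; apply: second_centerMn.
Qed.

Lemma starMzl u x n : zeta2 u -> (u *~ n) ⋆ x = (u ⋆ x) *~ n.
Proof.
move=> hu; case: n => n; first exact: starMnl.
by rewrite /intmul starNl ?starMnl //; apply: second_centerMn.
Qed.

Lemma nmulE n x : nmul A n x = x *+ n.
Proof. by elim: n => //= n ->; rewrite mulrS. Qed.

Lemma center_torsion_freeMn {e} n :
  center_torsion_free A -> zeta1 e -> e *+ n.+1 = 0 -> e = 0.
Proof. by move=> htf he en; apply: (htf e n he); rewrite nmulE. Qed.

Lemma center_torsion_freeMz {e} n :
  center_torsion_free A -> zeta1 e -> n != 0 -> e *~ n = 0 -> e = 0.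
Proof.
move=> htf he; case: n => [[|n]|n] // _; first exact: center_torsion_freeMn.
rewrite NegzE mulrNz => /eqP; rewrite oppr_eq0 => /eqP.
exact: center_torsion_freeMn.
Qed.

Lemma center_of_multiple a k :
  center_torsion_free A -> zeta2 a -> zeta1 (a *+ k.+1) -> zeta1 a.
Proof.
move=> htf ha hk x; have [hax hxa] := ha x; split.
  apply: (center_torsion_freeMn k htf hax).
  by rewrite -starMnl // star_centerl.
by apply: (center_torsion_freeMn k htf hxa); rewrite -starMnr star_centerr.
Qed.

Lemma subbrace_star_closed (L : A -> Prop) :
  (forall y, L y -> zeta2 y) -> L 0 ->
  (forall x y, L x -> L y -> L (x + y)) -> (forall x, L x -> L (- x)) ->
  (forall x y, L x -> L y -> L (x ⋆ y)) -> subbrace A L.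
Proof.
move=> L2 L0 LD LN Lstar; do !split => //.
  by move=> x y Lx Ly; rewrite mul_star; do 2!apply: (LD) => //; apply: Lstar.
move=> x Lx; rewrite (inv_second_center (L2 x Lx)).
by apply: (LD); [apply: LN | apply: Lstar].
Qed.

Section Spans.
Variable b : A.
Hypothesis hb : zeta2 b.

Definition span_center y := exists (n : int) z, zeta1 z /\ y = b *~ n + z.
Definition span_square y := exists n m : int, y = b *~ n + (b ⋆ b) *~ m.

Lemma square_center : zeta1 (b ⋆ b).
Proof. by case: (hb b). Qed.

Lemma star_span_centerl n z x : zeta1 z -> (b *~ n + z) ⋆ x = (b ⋆ x) *~ n.
Proof. by move=> hz; rewrite (starDl_center hz) starMzl. Qed.

Lemma star_span_centerr n z : zeta1 z -> b ⋆ (b *~ n + z) = (b ⋆ b) *~ n.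
Proof. by move=> hz; rewrite starDr starMzr (star_centerr hz) addr0. Qed.

Lemma span_center_second {y} : span_center y -> zeta2 y.
Proof.
case=> n [z [hz ->]].
apply: second_centerD (center_second hz).
by case: n => n; [|apply: second_centerN]; apply: second_centerMn.
Qed.

Lemma center_span_center {z} : zeta1 z -> span_center z.
Proof. by move=> hz; exists 0, z; rewrite mulr0z add0r. Qed.

Lemma span_centerD {x y} : span_center x -> span_center y -> span_center (x + y).
Proof.
case=> n [z [hz ->]] [n' [z' [hz' ->]]]; exists (n + n'), (z + z').
by rewrite mulrzDr addrACA; split; first exact: centerD.
Qed.

Lemma span_centerN {y} : span_center y -> span_center (- y).
Proof.
case=> n [z [hz ->]]; exists (- n), (- z).
by rewrite mulrNz opprD; split; first exact: centerN.
Qed.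

Lemma star_span_center {x y} :
  span_center x -> span_center y -> exists k, x ⋆ y = (b ⋆ b) *~ k.
Proof.
case=> n [z [hz ->]] [n' [z' [hz' ->]]]; exists (n' * n).
by rewrite star_span_centerl // star_span_centerr // mulrzA.
Qed.

Lemma span_center_subbrace : subbrace A span_center.
Proof.
apply: subbrace_star_closed.
- exact: @span_center_second.
- exact: center_span_center center0.
- exact: @span_centerD.
- exact: @span_centerN.
- move=> x y hx hy; apply: center_span_center.
  by case: (span_center_second hy x).
Qed.

Lemma span_center_ideal : ideal A span_center.
Proof.
split; first exact: span_center_subbrace.
split=> // x y _ hy; have [hxy hyx] := span_center_second hy x.
by split; apply: center_span_center.
Qed.

Lemma span_square_multiple m : span_square ((b ⋆ b) *~ m).
Proof. by exists 0, m; rewrite mulr0z add0r. Qed.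

Lemma span_square_span_center {y} : span_square y -> span_center y.
Proof.
case=> n [m ->]; exists n, ((b ⋆ b) *~ m).
by split; first exact: centerMz square_center.
Qed.

Lemma span_square_ideal_of : ideal_of A span_center span_square.
Proof.
have Istar x y : span_center x -> span_center y -> span_square (x ⋆ y).
  move=> hx hy; have [k ->] := star_span_center hx hy.
  exact: span_square_multiple.
split.
  apply: subbrace_star_closed.
  - by move=> y /span_square_span_center /span_center_second.
  - exact: span_square_multiple 0.
  - move=> _ _ [n [m ->]] [n' [m' ->]]; exists (n + n'), (m + m').
    by rewrite !mulrzDr addrACA.
  - move=> _ [n [m ->]]; exists (- n), (- m).
    by rewrite !mulrNz opprD.
  - by move=> x y /span_square_span_center hx /span_square_span_center hy;
      apply: Istar.
split=> [y|x y hx /span_square_span_center hy].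
  exact: span_square_span_center.
by split; apply: Istar.
Qed.

Lemma span_square_center y :
  (forall k, ~ zeta1 (b *+ k.+1)) -> span_square y -> zeta1 y ->
  exists m, y = (b ⋆ b) *~ m.
Proof.
move=> hfree [n [m ->]] hy; exists m.
have hbn : zeta1 (b *~ n).
  rewrite -(addrK ((b ⋆ b) *~ m) (b *~ n)).
  exact: centerD hy (centerN (centerMz m square_center)).
clear hy; case: n hbn => [[|n]|n] hbn; first by rewrite mulr0z add0r.
  by case: (hfree n); rewrite pmulrn.
by case: (hfree n); rewrite -[_ *+ _]opprK pmulrn -mulrNz -NegzE; apply: centerN.
Qed.

Lemma T_brace_star_square_multiple :
  T_brace A -> (forall k, ~ zeta1 (b *+ k.+1)) -> forall x,
  (exists m, b ⋆ x = (b ⋆ b) *~ m) /\ (exists m, x ⋆ b = (b ⋆ b) *~ m).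
Proof.
move=> hT hfree x.
have [_ [_ hI]] :=
  hT _ _ span_center_subbrace span_square_ideal_of span_center_ideal.
have Ib : span_square b by exists 1, 0; rewrite mulr1z mulr0z addr0.
have [Ibx Ixb] := hI x b I Ib; have [hbx hxb] := hb x.
by split; apply: span_square_center.
Qed.

End Spans.

Lemma second_center_sub_center a :
  T_brace A -> center_torsion_free A -> zeta2 a -> zeta1 a.
Proof.
move=> hT htf ha.
have [[k hk] | hfree] := EM (exists k, zeta1 (a *+ k.+1)).
  exact: center_of_multiple hk.
exfalso; apply: (hfree); exists 1%N; set b := a *+ 2.
have hb : zeta2 b by apply: second_centerMn.
have hbfree k : ~ zeta1 (b *+ k.+1).
  by rewrite /b -mulrnA mul2n doubleS => hk; apply: hfree; exists k.*2.+1.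
have star_b := T_brace_star_square_multiple _ hb hT hbfree.
have [[m hm] _] := star_b a.
have hd : b ⋆ b = (b ⋆ a) *+ 2 by apply: starMnr.
have hba : b ⋆ a = 0.
  have [hz _] := hb a.
  apply: (center_torsion_freeMz (2 * m - 1) htf hz); first by lia.
  by rewrite mulrzBr mulr1z mulrzA mulrz_nat -hd -hm subrr.
move=> x; have [[m1 ->] [m2 ->]] := star_b x.
by rewrite hd hba mul0rn !mul0rz.
Qed.

Lemma ucs_term_sub_center H : T_brace A -> center_torsion_free A ->
  ucs_term A H -> forall a, H a -> zeta1 a.
Proof.
move=> hT htf; elim=> [a -> | H' _ IH a Ha | F _ _ IH a [H' [FH' H'a]]].
- exact: center0.
- apply: second_center_sub_center => // x.
  by have [? ?] := Ha x; split; apply: IH.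
- exact: IH FH' a H'a.
Qed.

Lemma center_sub_hypercenter a : zeta1 a -> star_hypercenter A a.
Proof.
by move=> ha; exists (next_term A (fun a => a = zero)); split => //;
  apply/ucs_succ/ucs_zero.
Qed.

End Brace.

Theorem theoremA (A : brace) :
  T_brace A -> center_torsion_free A ->
  forall a : A, star_hypercenter A a <-> star_center A a.
Proof.
move=> hT htf a; split; last exact: center_sub_hypercenter.
by case=> H [hH Ha]; apply: ucs_term_sub_center hH a Ha.
Qed.
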